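(* Let $\Gamma=A\ast B$ with $A,B$ non-trivial, let $f=f_A\ast f_B$ be a split quasimorphism, and let $\sigma$ be an inner automorphism of $\Gamma$. Then $f$ is at bounded distance from $f^\sigma$; in particular $\omega_f=\omega_{f^\sigma}$ and $S=S^\sigma$. Consequently, for $\tau\in\mathrm{Aut}(\Gamma)$ the space $S^\tau$ only depends on the outer class of $\tau$.
   Context: Quasimorphisms $f_A:A\to\mathbb{R}$, $f_B:B\to\mathbb{R}$ are alternating ($f(x^{-1})=-f(x)$). For a free product $P\ast Q$, each non-trivial element has a unique normal form $p_1q_1\cdots p_nq_n$ ($p_i\in P$, $q_i\in Q$, all non-trivial except possibly $p_1$ or $q_n$), and the split quasimorphism is $(f_P\ast f_Q)(1)=0$, $(f_P\ast f_Q)(p_1q_1\cdots p_nq_n)=f_P(p_1)+f_Q(q_1)+\dots+f_P(p_n)+f_Q(q_n)$. For $\tau\in\mathrm{Aut}(\Gamma)$, $\Gamma=\tau(A)\ast\tau(B)$ is again a splitting, and $f^\tau:=f_{\tau(A)}\ast f_{\tau(B)}$ (split with respect to this splitting) where $f_{\tau(A)}=f_A\circ\tau^{-1}|_{\tau(A)}$, $f_{\tau(B)}=f_B\circ\tau^{-1}|_{\tau(B)}$. $\omega_f\in\mathrm{H}^2_\mathrm{b}(\Gamma,\mathbb{R})$ is the bounded class of $\partial f(g,h)=f(g)+f(h)-f(gh)$. $S\subset\mathrm{H}^2_\mathrm{b}(\Gamma,\mathbb{R})$ is the space of split classes of the splitting $A\ast B$, i.e. the set of classes $\omega_{f_A\ast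 f_B}$ with $f_A,f_B$ bounded alternating functions on $A,B$; $S^\tau$ is the corresponding space for the splitting $\tau(A)\ast\tau(B)$. *)

From Stdlib Require Import Reals List ClassicalEpsilon.
Open Scope R_scope.
Set Implicit Arguments.

Record group := Group {
  gcar :> Type;
  gmul : gcar -> gcar -> gcar;
  ginv : gcar -> gcar;
  gone : gcar;
  gmulA : forall x y z, gmul x (gmul y z) = gmul (gmul x y) z;
  gmul1 : forall x, gmul gone x = x;
  gmulV : forall x, gmul (ginv x) x = gone
}.

Arguments gmul {g} _ _.
Arguments ginv {g} _.

Section Defs.
Context {G : group}.

Definition subgroup (P : G -> Prop) : Prop :=
  P (gone G) /\ (forall x y, P x -> P y -> P (gmul x y)) /\
  (forall x, P x -> P (ginv x)).

Definition nontrivial (P : G -> Prop) : Prop := exists x, P x /\ x <> gone G.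

(** Words in A and B: letters tagged [true] lie in A, [false] in B. *)
Definition letter_ok (A B : G -> Prop) (l : bool * G) : Prop :=
  (if fst l then A (snd l) else B (snd l)) /\ snd l <> gone G.

Fixpoint alternating_tags (w : list (bool * G)) : Prop :=
  match w with
  | nil => True
  | l :: w' =>
      match w' with
      | nil => True
      | l' :: _ => fst l <> fst l' /\ alternating_tags w'
      end
  end.

Definition reduced (A B : G -> Prop) (w : list (bool * G)) : Prop :=
  Forall (letter_ok A B) w /\ alternating_tags w.

Definition wprod (w : list (bool * G)) : G :=
  fold_right (fun (l : bool * G) (acc : G) => gmul (snd l) acc) (gone G) w.

(** G is the (internal) free product A * B: unique normal form. *)
Definition free_product (A B : G -> Prop) : Prop :=
  subgroup A /\ subgroup B /\
  forall g : G, exists! w, reduced A B w /\ wprod w = g.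

Definition wsum (fA fB : G -> R) (w : list (bool * G)) : R :=
  fold_right (fun (l : bool * G) (acc : R) => (if fst l then fA (snd l) else fB (snd l)) + acc) 0 w.

(** The split quasimorphism fA * fB w.r.t. the splitting A * B
    (value on the normal form; well defined when [free_product A B]). *)
Definition split_fun (A B : G -> Prop) (fA fB : G -> R) (g : G) : R :=
  epsilon (inhabits 0)
    (fun r => exists w, reduced A B w /\ wprod w = g /\ r = wsum fA fB w).

Definition alternating_on (P : G -> Prop) (f : G -> R) : Prop :=
  forall x, P x -> f (ginv x) = - f x.

Definition quasimorphism_on (P : G -> Prop) (f : G -> R) : Prop :=
  exists D, forall x y, P x -> P y -> Rabs (f x + f y - f (gmul x y)) <= D.

Definition bounded_on (P : G -> Prop) (f : G -> R) : Prop :=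
  exists C, forall x, P x -> Rabs (f x) <= C.

Definition bounded (f : G -> R) : Prop := exists C, forall x, Rabs (f x) <= C.

Definition dcob (f : G -> R) (g h : G) : R := f g + f h - f (gmul g h).

(** Two 2-cochains define the same class in H^2_b(G,R):
    they differ by the coboundary of a bounded 1-cochain. *)
Definition same_bclass (c1 c2 : G -> G -> R) : Prop :=
  exists b : G -> R, bounded b /\ forall g h, c1 g h - c2 g h = dcob b g h.

(** Membership of a class (represented by c) in the space S of split
    classes of the splitting A * B. *)
Definition in_split_space (A B : G -> Prop) (c : G -> G -> R) : Prop :=
  exists fA fB : G -> R,
    bounded_on A fA /\ alternating_on A fA /\
    bounded_on B fB /\ alternating_on B fB /\
    same_bclass c (dcob (split_fun A B fA fB)).

Definition ghom (t : G -> G) : Prop := forall x y, t (gmul x y) = gmul (t x) (t y).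

Definition automorphism (t : G -> G) : Prop :=
  ghom t /\ (forall x y, t x = t y -> x = y) /\ (forall y, exists x, t x = y).

Definition img (t : G -> G) (P : G -> Prop) (y : G) : Prop := exists x, P x /\ t x = y.

Definition conj (g x : G) : G := gmul (gmul g x) (ginv g).

End Defs.

From Stdlib Require Import Reals List Lra ClassicalEpsilon FunctionalExtensionality PropExtensionality.
Open Scope R_scope.

(* Left multiplication by a letter h of A or B changes the normal form of x
   only in its first letter: h is prepended, merged into the first letter, or
   cancels it.  The quasimorphism inequality on the factor therefore bounds
   f(hx) - f(x) independently of x, and induction on the normal form of h gives
   the same for every h.  As f is alternating, right multiplication is bounded
   as well, so f(g^-1 x g) - f(x) is bounded.  Conjugation by g carries normal
   forms for A * B to normal forms for gAg^-1 * gBg^-1, whence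
   f^sigma(x) = f(g^-1 x g).  Applied to bounded f_A, f_B this gives S = S^sigma,
   and if tau' = sigma o tau the splitting tau'(A) * tau'(B) is the conjugate of
   tau(A) * tau(B) by sigma. *)

Section GroupFacts.
Context {G : group}.

Lemma gmulrV (x : G) : gmul x (ginv x) = gone G.
Proof.
  rewrite <- (gmul1 G (gmul x (ginv x))), <- (gmulV G (ginv x)) at 1.
  rewrite <- gmulA, (gmulA _ (ginv x) x (ginv x)), gmulV, gmul1.
  apply gmulV.
Qed.

Lemma gmulr1 (x : G) : gmul x (gone G) = x.
Proof. rewrite <- (gmulV G x), gmulA, gmulrV, gmul1. reflexivity. Qed.

Lemma ginv_unique (x y : G) : gmul x y = gone G -> y = ginv x.
Proof. intro Hxy. rewrite <- (gmul1 G y), <- (gmulV G x), <- gmulA, Hxy, gmulr1. reflexivity. Qed.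

Lemma ginvK (x : G) : ginv (ginv x) = x.
Proof. symmetry. apply ginv_unique, gmulV. Qed.

Lemma ginvM (x y : G) : ginv (gmul x y) = gmul (ginv y) (ginv x).
Proof.
  symmetry. apply ginv_unique.
  rewrite <- gmulA, (gmulA _ y), gmulrV, gmul1, gmulrV. reflexivity.
Qed.

Lemma ginv1 : ginv (gone G) = gone G.
Proof. symmetry. apply ginv_unique, gmul1. Qed.

Lemma gmulI (a x y : G) : gmul a x = gmul a y -> x = y.
Proof. intro E. rewrite <- (gmul1 G x), <- (gmul1 G y), <- (gmulV G a), <- !gmulA, E. reflexivity. Qed.

Lemma ghom1 (t : G -> G) : ghom t -> t (gone G) = gone G.
Proof. intro Ht. apply (gmulI (t (gone G))). rewrite <- Ht, gmul1, gmulr1. reflexivity. Qed.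

Lemma ghomV (t : G -> G) (x : G) : ghom t -> t (ginv x) = ginv (t x).
Proof. intro Ht. apply ginv_unique. rewrite <- Ht, gmulrV. apply ghom1, Ht. Qed.

Lemma conjK (g x : G) : conj (ginv g) (conj g x) = x.
Proof. unfold conj. rewrite ginvK, !gmulA, gmulV, gmul1, <- !gmulA, gmulV, gmulr1. reflexivity. Qed.

Lemma conjVK (g x : G) : conj g (conj (ginv g) x) = x.
Proof. rewrite <- (ginvK g) at 1. apply conjK. Qed.

Lemma conj_ghom (g : G) : ghom (conj g).
Proof. intros x y. unfold conj. rewrite !gmulA, <- (gmulA _ _ (ginv g) g), gmulV, gmulr1. reflexivity. Qed.

Lemma conj_automorphism (g : G) : automorphism (conj g).
Proof.
  split; [apply conj_ghom | split].
  - intros x y E. rewrite <- (conjK g x), <- (conjK g y), E. reflexivity.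
  - intro y. exists (conj (ginv g) y). apply conjVK.
Qed.

Lemma img_id (P : G -> Prop) : img (fun x => x) P = P.
Proof.
  apply functional_extensionality. intro y. apply propositional_extensionality.
  split; [intros [x [Hx <-]]; exact Hx | intro Hy; exists y; auto].
Qed.

Lemma img_comp (t1 t2 s : G -> G) (P : G -> Prop) :
  (forall x, t2 x = s (t1 x)) -> img t2 P = img s (img t1 P).
Proof.
  intro Ht. apply functional_extensionality. intro y. apply propositional_extensionality.
  split.
  - intros [x [Hx <-]]. exists (t1 x). split; [exists x; auto | symmetry; apply Ht].
  - intros [z [[x [Hx <-]] <-]]. exists x. auto.
Qed.

Lemma img_conjK (g : G) (P : G -> Prop) : img (conj (ginv g)) (img (conj g) P) = P.
Proof.
  rewrite <- (img_comp (conj g) (fun x => x)); [apply img_id | intro; symmetry; apply conjK].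
Qed.

Lemma subgroup_img (t : G -> G) (P : G -> Prop) : ghom t -> subgroup P -> subgroup (img t P).
Proof.
  intros Ht [P1 [PM PV]]. split; [|split].
  - exists (gone G). split; [exact P1 | apply ghom1, Ht].
  - intros x y [a [Ha <-]] [b [Hb <-]]. exists (gmul a b). auto.
  - intros x [a [Ha <-]]. exists (ginv a). split; [auto | apply ghomV, Ht].
Qed.

Lemma bounded_on_img (t s : G -> G) (P : G -> Prop) (f : G -> R) :
  (forall x, s (t x) = x) -> bounded_on P f -> bounded_on (img t P) (fun y => f (s y)).
Proof. intros Hst [C HC]. exists C. intros y [a [Ha <-]]. rewrite Hst. auto. Qed.

Lemma alternating_on_img (t s : G -> G) (P : G -> Prop) (f : G -> R) :
  ghom t -> (forall x, s (t x) = x) ->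
  alternating_on P f -> alternating_on (img t P) (fun y => f (s y)).
Proof. intros Ht Hst Hf y [a [Ha <-]]. rewrite <- ghomV, !Hst; auto. Qed.

Lemma quasimorphism_of_bounded_on (P : G -> Prop) (f : G -> R) :
  subgroup P -> bounded_on P f -> quasimorphism_on P f.
Proof.
  intros [_ [PM _]] [C HC]. exists (3 * C). intros x y Hx Hy.
  pose proof (HC x Hx). pose proof (HC y Hy). pose proof (HC _ (PM x y Hx Hy)).
  split_Rabs; lra.
Qed.

Lemma same_bclass_trans (c1 c2 c3 : G -> G -> R) :
  same_bclass c1 c2 -> same_bclass c2 c3 -> same_bclass c1 c3.
Proof.
  intros [b [[C HC] Hb]] [b' [[C' HC'] Hb']]. exists (fun x => b x + b' x). split.
  - exists (C + C'). intro x. specialize (HC x). specialize (HC' x). split_Rabs; lra.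
  - intros g h. specialize (Hb g h). specialize (Hb' g h). unfold dcob in *. lra.
Qed.

Lemma same_bclass_dcob (f f' : G -> R) :
  (exists C, forall x, Rabs (f x - f' x) <= C) -> same_bclass (dcob f) (dcob f').
Proof.
  intros Hff'. exists (fun x => f x - f' x). split; [exact Hff' |].
  intros g h. unfold dcob. lra.
Qed.

End GroupFacts.

Section Words.
Context {G : group}.
Implicit Types (A B : G -> Prop) (w : list (bool * G)).

Definition factor A B (b : bool) (x : G) : Prop := if b then A x else B x.
Definition factor_fun (fA fB : G -> R) (b : bool) (x : G) : R := if b then fA x else fB x.

Definition map_word (t : G -> G) w : list (bool * G) := map (fun l => (fst l, t (snd l))) w.

Definition inv_word w : list (bool * G) := rev (map_word ginv w).

Lemma wprod_app w w' : wprod (w ++ w') = gmul (wprod w) (wprod w').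
Proof. induction w as [|l w IH]; simpl; [rewrite gmul1 | rewrite IH, gmulA]; reflexivity. Qed.

Lemma wsum_app fA fB w w' : wsum fA fB (w ++ w') = wsum fA fB w + wsum fA fB w'.
Proof. induction w as [|l w IH]; simpl; [| rewrite IH]; lra. Qed.

Lemma wprod_map_word (t : G -> G) w : ghom t -> wprod (map_word t w) = t (wprod w).
Proof.
  intro Ht. induction w as [|l w IH]; simpl; [symmetry; apply ghom1, Ht |].
  rewrite IH, Ht. reflexivity.
Qed.

Lemma wsum_map_word (t : G -> G) fA fB w :
  wsum fA fB (map_word t w) = wsum (fun a => fA (t a)) (fun a => fB (t a)) w.
Proof. induction w as [|[[|] a] w IH]; simpl; rewrite ?IH; reflexivity. Qed.

Lemma wprod_inv_word w : wprod (inv_word w) = ginv (wprod w).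
Proof.
  induction w as [|l w IH]; unfold inv_word in *; simpl; [symmetry; apply ginv1 |].
  rewrite wprod_app, IH. simpl. rewrite gmulr1, ginvM. reflexivity.
Qed.

Lemma wsum_inv_word A B fA fB w :
  alternating_on A fA -> alternating_on B fB -> Forall (letter_ok A B) w ->
  wsum fA fB (inv_word w) = - wsum fA fB w.
Proof.
  intros HaA HaB Hw. induction Hw as [|[b a] w [Ha _] _ IH]; unfold inv_word in *; simpl; [lra |].
  rewrite wsum_app, IH. simpl in *. destruct b; [rewrite HaA | rewrite HaB]; auto; lra.
Qed.

Lemma alternating_tags_map_word (t : G -> G) w :
  alternating_tags (map_word t w) <-> alternating_tags w.
Proof.
  induction w as [|l [|l' w] IH]; simpl in *; tauto.
Qed.

Lemma alternating_tags_snoc w (l l' : bool * G) :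
  alternating_tags (w ++ l' :: nil) -> fst l' <> fst l ->
  alternating_tags (w ++ l' :: l :: nil).
Proof.
  induction w as [|x [|y w] IH]; simpl in *; tauto.
Qed.

Lemma alternating_tags_rev w : alternating_tags w -> alternating_tags (rev w).
Proof.
  destruct w as [|x w]; [easy | simpl].
  revert x. induction w as [|y w IH]; intros x Hw; [easy |].
  destruct Hw as [Hxy Hw]. simpl. rewrite <- app_assoc.
  apply alternating_tags_snoc; auto.
Qed.

Lemma reduced_tail A B (l : bool * G) w : reduced A B (l :: w) -> reduced A B w.
Proof.
  intros [Hl Ha]. split; [inversion Hl; assumption |].
  destruct w; simpl in *; tauto.
Qed.

Lemma reduced_cons A B (b : bool) (a : G) w :
  factor A B b a -> a <> gone G -> reduced A B w ->
  (forall l w', w = l :: w' -> fst l <> b) -> reduced A B ((b, a) :: w).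
Proof.
  intros Ha Ha1 [Hl Halt] Hhead. split; [constructor; [split|]; assumption |].
  destruct w as [|l w']; simpl; [exact I |].
  split; [intro E; apply (Hhead l w'); auto | exact Halt].
Qed.

Lemma reduced_replace_head A B (b : bool) (a a' : G) w :
  factor A B b a' -> a' <> gone G -> reduced A B ((b, a) :: w) -> reduced A B ((b, a') :: w).
Proof.
  intros Ha' Ha'1 [Hl Halt]. inversion Hl; subst. split; [constructor; [split|]; assumption |].
  destruct w; simpl in *; tauto.
Qed.

Lemma word_head_cases (b : bool) w :
  (exists a w', w = (b, a) :: w') \/ (forall l w', w = l :: w' -> fst l <> b).
Proof.
  destruct w as [|[b' a] w]; [right; discriminate |].
  destruct (Bool.bool_dec b' b) as [<- | Hb]; [left; eauto | right].
  intros l w' E. injection E as <- _. exact Hb.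
Qed.

Lemma reduced_map_word (t : G -> G) A B w :
  ghom t -> (forall x y, t x = t y -> x = y) ->
  reduced A B w -> reduced (img t A) (img t B) (map_word t w).
Proof.
  intros Ht Hinj [Hl Halt]. split; [| apply alternating_tags_map_word, Halt].
  apply Forall_map. eapply Forall_impl; [| exact Hl].
  intros [b a] [Ha Ha1]. split; simpl in *.
  - destruct b; exists a; auto.
  - intro E. apply Ha1, Hinj. rewrite E. symmetry. apply ghom1, Ht.
Qed.

Lemma reduced_map_word_inv (t : G -> G) A B w' :
  ghom t -> reduced (img t A) (img t B) w' -> exists w, reduced A B w /\ map_word t w = w'.
Proof.
  intros Ht [Hl Halt].
  enough (Hw : exists w, Forall (letter_ok A B) w /\ map_word t w = w').
  { destruct Hw as [w [Hw <-]]. exists w. split; [split |]; auto.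
    apply (alternating_tags_map_word t), Halt. }
  clear Halt. induction Hl as [|[b a'] w' [Ha' Ha'1] _ [w [Hw <-]]].
  - exists nil. auto.
  - simpl in Ha', Ha'1.
    assert (Hpre : exists a, factor A B b a /\ t a = a').
    { destruct b; destruct Ha' as [a [Ha <-]]; exists a; auto. }
    destruct Hpre as [a [Ha <-]].
    exists ((b, a) :: w). split; [| reflexivity].
    constructor; [split |]; auto.
    simpl. intro E. apply Ha'1. rewrite E. apply ghom1, Ht.
Qed.

Lemma reduced_inv_word A B w : free_product A B -> reduced A B w -> reduced A B (inv_word w).
Proof.
  intros [[_ [_ AV]] [[_ [_ BV]] _]] [Hl Halt]. split.
  - apply Forall_rev, Forall_map. eapply Forall_impl; [| exact Hl].
    intros [b a] [Ha Ha1]. split; simpl in *.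
    + destruct b; auto.
    + intro E. apply Ha1. rewrite <- (ginvK a), E. apply ginv1.
  - apply alternating_tags_rev, alternating_tags_map_word, Halt.
Qed.

End Words.

Section SplitFun.
Context {G : group}.
Variables (A B : G -> Prop) (fA fB : G -> R).
Hypothesis HF : free_product A B.

Local Notation f := (split_fun A B fA fB).

Lemma normal_form (x : G) : exists w, reduced A B w /\ wprod w = x.
Proof. destruct HF as [_ [_ HU]]. destruct (HU x) as [w [Hw _]]. exists w. exact Hw. Qed.

Lemma split_fun_wprod w : reduced A B w -> f (wprod w) = wsum fA fB w.
Proof.
  intro Hw. unfold split_fun.
  destruct (epsilon_spec (inhabits 0)
    (fun r => exists w0, reduced A B w0 /\ wprod w0 = wprod w /\ r = wsum fA fB w0))
    as [w' [Hw' [Hp ->]]]; [exists (wsum fA fB w), w; auto |].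
  destruct HF as [_ [_ HU]]. destruct (HU (wprod w)) as [w0 [_ Hu]].
  rewrite <- (Hu w' (Logic.conj Hw' Hp)), <- (Hu w (Logic.conj Hw eq_refl)). reflexivity.
Qed.

Lemma split_fun_cons (b : bool) (a : G) w :
  reduced A B ((b, a) :: w) -> f (gmul a (wprod w)) = factor_fun fA fB b a + f (wprod w).
Proof.
  intro Hw. change (gmul a (wprod w)) with (wprod ((b, a) :: w)).
  rewrite !split_fun_wprod; [reflexivity | eapply reduced_tail; eauto | exact Hw].
Qed.

Hypotheses (HaA : alternating_on A fA) (HaB : alternating_on B fB).
Hypotheses (HqA : quasimorphism_on A fA) (HqB : quasimorphism_on B fB).

Lemma split_funV (x : G) : f (ginv x) = - f x.
Proof.
  destruct (normal_form x) as [w [Hw <-]].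
  rewrite <- wprod_inv_word, !split_fun_wprod; [| assumption | apply reduced_inv_word; assumption].
  eapply wsum_inv_word; eauto. apply Hw.
Qed.

Lemma split_fun_mull_letter (b : bool) (h : G) :
  factor A B b h -> exists C, forall x, Rabs (f (gmul h x) - f x) <= C.
Proof.
  intro Hh. pose proof HF as [HA [HB _]].
  assert (Hsub : subgroup (factor A B b)) by (destruct b; assumption).
  destruct Hsub as [S1 [SM _]].
  assert (Halt : alternating_on (factor A B b) (factor_fun fA fB b)) by (destruct b; assumption).
  assert (Hq : quasimorphism_on (factor A B b) (factor_fun fA fB b)) by (destruct b; assumption).
  destruct Hq as [D HD].
  assert (HD0 : 0 <= D) by (specialize (HD _ _ S1 S1); split_Rabs; lra).
  exists (D + Rabs (factor_fun fA fB b h)). intro x.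
  destruct (classic (h = gone G)) as [-> | Hh1].
  { rewrite gmul1. split_Rabs; lra. }
  destruct (normal_form x) as [w [Hw <-]].
  destruct (word_head_cases b w) as [[a [w' ->]] | Hhead].
  - pose proof Hw as [Hl _]. inversion Hl as [| ? ? [Ha _]]; subst.
    simpl wprod. rewrite gmulA, (split_fun_cons b a w' Hw).
    destruct (classic (gmul h a = gone G)) as [Eha | Eha].
    + rewrite Eha, gmul1, (ginv_unique _ _ Eha), Halt by exact Hh. split_Rabs; lra.
    + rewrite (split_fun_cons b (gmul h a) w') by (eapply reduced_replace_head; eauto).
      specialize (HD h a Hh Ha). split_Rabs; lra.
  - rewrite (split_fun_cons b h w) by (apply reduced_cons; assumption). split_Rabs; lra.
Qed.

Lemma split_fun_mull_bounded (h : G) : exists C, forall x, Rabs (f (gmul h x) - f x) <= C.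
Proof.
  destruct (normal_form h) as [w [[Hw _] <-]].
  induction Hw as [|[b a] w [Ha _] _ [C IH]].
  - exists 0. intro x. simpl. rewrite gmul1. split_Rabs; lra.
  - destruct (split_fun_mull_letter b a Ha) as [Ca Hca].
    exists (Ca + C). intro x. simpl. rewrite <- gmulA.
    specialize (Hca (gmul (wprod w) x)). specialize (IH x). split_Rabs; lra.
Qed.

Lemma split_fun_mulr_bounded (h : G) : exists C, forall x, Rabs (f (gmul x h) - f x) <= C.
Proof.
  destruct (split_fun_mull_bounded (ginv h)) as [C HC].
  exists C. intro x. specialize (HC (ginv x)).
  rewrite <- ginvM, !split_funV in HC. split_Rabs; lra.
Qed.

Lemma split_fun_conj_bounded (g : G) : exists C, forall x, Rabs (f x - f (conj (ginv g) x)) <= C.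
Proof.
  destruct (split_fun_mull_bounded g) as [C1 H1].
  destruct (split_fun_mulr_bounded g) as [C2 H2].
  exists (C1 + C2). intro x. unfold conj. rewrite ginvK.
  specialize (H1 (gmul (ginv g) x)). specialize (H2 (gmul (ginv g) x)).
  rewrite gmulA, gmulrV, gmul1 in H1. split_Rabs; lra.
Qed.

End SplitFun.

Section Transport.
Context {G : group}.
Variables (A B : G -> Prop) (t : G -> G).
Hypotheses (Ht : automorphism t) (HF : free_product A B).

Lemma free_product_img : free_product (img t A) (img t B).
Proof.
  destruct Ht as [Hhom [Hinj Hsurj]]. destruct HF as [HA [HB HU]].
  split; [apply subgroup_img; auto | split; [apply subgroup_img; auto |]].
  intro y. destruct (Hsurj y) as [x <-]. destruct (HU x) as [w [[Hw Hp] Hu]].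
  exists (map_word t w). split.
  - split; [apply reduced_map_word; auto | rewrite wprod_map_word, Hp; auto].
  - intros w'' [Hr Hp']. destruct (reduced_map_word_inv t A B w'' Hhom Hr) as [w0 [Hw0 <-]].
    f_equal. apply Hu. split; [exact Hw0 |]. apply Hinj. rewrite <- wprod_map_word; auto.
Qed.

Lemma split_fun_img (hA hB : G -> R) (x : G) :
  split_fun (img t A) (img t B) hA hB (t x) =
  split_fun A B (fun a => hA (t a)) (fun a => hB (t a)) x.
Proof.
  destruct (normal_form A B HF x) as [w [Hw <-]].
  pose proof Ht as [Hhom [Hinj _]].
  rewrite <- wprod_map_word, !split_fun_wprod by auto using free_product_img, reduced_map_word.
  apply wsum_map_word.
Qed.

End Transport.

Lemma split_fun_conj {G : group} (A B : G -> Prop) (fA fB : G -> R) (g x : G) :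
  free_product A B ->
  split_fun (img (conj g) A) (img (conj g) B)
    (fun y => fA (conj (ginv g) y)) (fun y => fB (conj (ginv g) y)) x =
  split_fun A B fA fB (conj (ginv g) x).
Proof.
  intro HF. rewrite <- (conjVK g x) at 1.
  rewrite split_fun_img by auto using conj_automorphism.
  f_equal; apply functional_extensionality; intro a; rewrite conjK; reflexivity.
Qed.

Lemma split_fun_conj_dist {G : group} (A B : G -> Prop) (fA fB : G -> R) (g : G) :
  free_product A B ->
  alternating_on A fA -> alternating_on B fB -> quasimorphism_on A fA -> quasimorphism_on B fB ->
  exists C, forall x, Rabs (split_fun A B fA fB x -
    split_fun (img (conj g) A) (img (conj g) B)
      (fun y => fA (conj (ginv g) y)) (fun y => fB (conj (ginv g) y)) x) <= C.
Proof.
  intros HF HaA HaB HqA HqB.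
  destruct (split_fun_conj_bounded A B fA fB HF HaA HaB HqA HqB g) as [C HC].
  exists C. intro x. rewrite split_fun_conj by exact HF. apply HC.
Qed.

Lemma in_split_space_conj {G : group} (A B : G -> Prop) (g : G) (c : G -> G -> R) :
  free_product A B -> in_split_space A B c -> in_split_space (img (conj g) A) (img (conj g) B) c.
Proof.
  intros HF [fA [fB [bA [aA [bB [aB Hc]]]]]]. pose proof HF as [SA [SB _]].
  exists (fun y => fA (conj (ginv g) y)), (fun y => fB (conj (ginv g) y)).
  split; [| split; [| split; [| split]]];
    try (apply bounded_on_img; [apply conjK | assumption]);
    try (apply alternating_on_img; [apply conj_ghom | apply conjK | assumption]).
  apply (same_bclass_trans _ _ _ Hc), same_bclass_dcob, split_fun_conj_dist;
    auto using quasimorphism_of_bounded_on.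
Qed.

Lemma in_split_space_conj_iff {G : group} (A B : G -> Prop) (g : G) (c : G -> G -> R) :
  free_product A B ->
  in_split_space A B c <-> in_split_space (img (conj g) A) (img (conj g) B) c.
Proof.
  intro HF. split; [apply in_split_space_conj, HF |].
  intro Hc. rewrite <- (img_conjK g A), <- (img_conjK g B).
  apply in_split_space_conj; [apply free_product_img; auto using conj_automorphism | exact Hc].
Qed.

Theorem proposition3p15 (G : group) (A B : G -> Prop) (fA fB : G -> R) (g : G) :
  free_product A B -> nontrivial A -> nontrivial B ->
  alternating_on A fA -> quasimorphism_on A fA ->
  alternating_on B fB -> quasimorphism_on B fB ->
  let sA := img (conj g) A in
  let sB := img (conj g) B in
  let f := split_fun A B fA fB in
  let fs := split_fun sA sB (fun y => fA (conj (ginv g) y))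
                            (fun y => fB (conj (ginv g) y)) in
  (* f is at bounded distance from f^sigma *)
  (exists C, forall x, Rabs (f x - fs x) <= C) /\
  (* omega_f = omega_{f^sigma} in H^2_b *)
  same_bclass (dcob f) (dcob fs) /\
  (* S = S^sigma *)
  (forall c, in_split_space A B c <-> in_split_space sA sB c) /\
  (* S^tau only depends on the outer class of tau *)
  (forall t1 t2 : G -> G, automorphism t1 -> automorphism t2 ->
     (exists h : G, forall x, t2 x = conj h (t1 x)) ->
     forall c, in_split_space (img t1 A) (img t1 B) c <->
               in_split_space (img t2 A) (img t2 B) c).
Proof.
  intros HF _ _ HaA HqA HaB HqB sA sB f fs.
  assert (Hdist : exists C, forall x, Rabs (f x - fs x) <= C)
    by (apply split_fun_conj_dist; assumption).
  split; [exact Hdist | split; [apply same_bclass_dcob, Hdist | split]].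
  - intro c. apply in_split_space_conj_iff, HF.
  - intros t1 t2 Ht1 _ [h Hh] c.
    rewrite !(img_comp t1 t2 (conj h)) by exact Hh.
    apply in_split_space_conj_iff, free_product_img; assumption.
Qed.
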